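(* Let $V$ be a finite nonempty set of voters and $A$ a finite set of alternatives with $|A|\ge 4$. Let $F:\mathcal{P}(V,A)\to S_2(A)$ be a consular election rule that is Marian, satisfies SPO and SPP, and is weakly viable. Then $F$ has a weak dictator, i.e. a voter $i$ such that for every profile $P$, the top-ranked alternative of $P_i$ belongs to $F(P)$.
   Context: A profile assigns to each voter $i\in V$ a linear order $P_i$ on $A$; $P_i'P_{-i}$ replaces voter $i$'s order by $P_i'$. $S_2(A)$ is the set of 2-element subsets of $A$; a consular election rule is a map $F:\mathcal{P}(V,A)\to S_2(A)$. $\mathrm{best}(P_i,W)$, $\mathrm{worst}(P_i,W)$ denote the $P_i$-best and $P_i$-worst elements of nonempty $W\subseteq A$. SPO: for all profiles $P$, voters $i$ and linear orders $P_i'$, $\mathrm{best}(P_i,F(P))\succeq_i\mathrm{best}(P_i,F(P_i'P_{-i}))$; SPP: same with $\mathrm{worst}$. Weakly viable: every $a\in A$ lies in $F(P)$ for some $P$. $F$ is Marian if there is $m\in A$ with $m\in F(P)$ for every profile $P$. *)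

From mathcomp Require Import all_boot fingroup perm.
Set Implicit Arguments. Unset Strict Implicit. Unset Printing Implicit Defensive.

(* A linear order on A is encoded by a ranking permutation r : {perm A}:
   r x is the position of x (0 = top); x is weakly preferred to y iff r x <= r y.
   Here positions live in A itself via enum_rank, i.e. ranks are taken in 'I_#|A|. *)
Definition linord (A : finType) := {perm A}.

Definition rank (A : finType) (P : linord A) (x : A) : nat := enum_rank (P x).

Definition wpref (A : finType) (P : linord A) (x y : A) : bool := rank P x <= rank P y.

Definition profile (V A : finType) := {ffun V -> linord A}.

Definition update (V A : finType) (P : profile V A) (i : V) (Pi : linord A) : profile V A :=
  [ffun j => if j == i then Pi else P j].

Definition best (A : finType) (P : linord A) (W : {set A}) : option A :=
  [pick x in W | [forall y in W, wpref P x y]].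
Definition worst (A : finType) (P : linord A) (W : {set A}) : option A :=
  [pick x in W | [forall y in W, wpref P y x]].

Definition opt_wpref (A : finType) (P : linord A) (o1 o2 : option A) : bool :=
  match o1, o2 with Some x, Some y => wpref P x y | _, _ => false end.

Definition consular (V A : finType) (F : profile V A -> {set A}) : Prop :=
  forall P : profile V A, #|F P| = 2.

Definition SPO (V A : finType) (F : profile V A -> {set A}) : Prop :=
  forall (P : profile V A) (i : V) (Pi' : linord A),
    opt_wpref (P i) (best (P i) (F P)) (best (P i) (F (update P i Pi'))).

Definition SPP (V A : finType) (F : profile V A -> {set A}) : Prop :=
  forall (P : profile V A) (i : V) (Pi' : linord A),
    opt_wpref (P i) (worst (P i) (F P)) (worst (P i) (F (update P i Pi'))).

Definition weakly_viable (V A : finType) (F : profile V A -> {set A}) : Prop :=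
  forall a : A, exists P : profile V A, a \in F P.

Definition marian (V A : finType) (F : profile V A -> {set A}) : Prop :=
  exists m : A, forall P : profile V A, m \in F P.

Definition top (A : finType) (P : linord A) (x : A) : Prop :=
  forall y, wpref P x y.

Definition weak_dictator (V A : finType) (F : profile V A -> {set A}) (i : V) : Prop :=
  forall (P : profile V A) (x : A), top (P i) x -> x \in F P.

From mathcomp Require Import all_boot fingroup perm.
Set Implicit Arguments. Unset Strict Implicit. Unset Printing Implicit Defensive.

(* Since m lies in every outcome, F is determined by the other elected
   alternative g P, and SPO together with SPP imply that every voter
   weakly prefers g P to the outcome of any of her deviations: g is a
   strategy-proof social choice function onto A \ {m}, a set of at least three
   alternatives.  The Gibbard-Satterthwaite argument then applies: strategy-
   proofness gives monotonicity, hence unanimity and Pareto efficiency, so the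
   whole electorate is decisive; a coalition decisive for one pair is decisive
   for all pairs, and of two coalitions whose union is decisive one is
   decisive.  Shrinking the electorate yields a decisive voter, whose top
   alternative, when it is not m, is g P. *)

Section Preference.
Variables (A : finType) (R : linord A).

Lemma wpref_refl x : wpref R x x.
Proof. exact: leqnn. Qed.

Lemma wpref_trans x y z : wpref R x y -> wpref R y z -> wpref R x z.
Proof. exact: leq_trans. Qed.

Lemma wpref_total x y : wpref R x y || wpref R y x.
Proof. exact: leq_total. Qed.

Lemma wpref_anti x y : wpref R x y -> wpref R y x -> x = y.
Proof.
rewrite /wpref /rank => Rxy Ryx.
have /eqP/val_inj/enum_rank_inj/perm_inj // : enum_rank (R x) == enum_rank (R y) :> nat.
by rewrite eqn_leq Rxy Ryx.
Qed.

Lemma negb_wpref x y : x != y -> ~~ wpref R x y = wpref R y x.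
Proof.
move=> xy; apply/idP/idP => [|Ryx]; first by case/orP: (wpref_total x y) => ->.
by apply/negP => /wpref_anti/(_ Ryx)/eqP; rewrite (negbTE xy).
Qed.

Lemma wpref_neq_above a b y : a != b -> wpref R a b -> wpref R b y -> y != a.
Proof.
move=> ab Rab Rby; apply: contraNneq ab => ya.
by apply/eqP/(wpref_anti Rab); rewrite -ya.
Qed.

Lemma best_eq (W : {set A}) x :
  x \in W -> (forall y, y \in W -> wpref R x y) -> best R W = Some x.
Proof.
move=> xW xmin; rewrite /best; case: pickP => [z /andP[zW /forall_inP zmin] | none].
  by congr Some; apply: wpref_anti (zmin x xW) (xmin z zW).
have /negP[] := negbT (none x); rewrite /= xW; exact/forall_inP.
Qed.

Lemma worst_eq (W : {set A}) x :
  x \in W -> (forall y, y \in W -> wpref R y x) -> worst R W = Some x.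
Proof.
move=> xW xmax; rewrite /worst; case: pickP => [z /andP[zW /forall_inP zmax] | none].
  by congr Some; apply: wpref_anti (xmax z zW) (zmax x xW).
have /negP[] := negbT (none x); rewrite /= xW; exact/forall_inP.
Qed.

Lemma best_pair x y : best R [set x; y] = Some (if wpref R x y then x else y).
Proof.
apply: best_eq => [|z /set2P[]->]; case: ifP => Rxy; rewrite ?set21 ?set22 ?wpref_refl //.
by case/orP: (wpref_total x y) => //; rewrite Rxy.
Qed.

Lemma worst_pair x y : worst R [set x; y] = Some (if wpref R x y then y else x).
Proof.
apply: worst_eq => [|z /set2P[]->]; case: ifP => Rxy; rewrite ?set21 ?set22 ?wpref_refl //.
by case/orP: (wpref_total x y) => //; rewrite Rxy.
Qed.

Lemma wpref_of_best_worst m a b : a != m ->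
  opt_wpref R (best R [set m; a]) (best R [set m; b]) ->
  opt_wpref R (worst R [set m; a]) (worst R [set m; b]) -> wpref R a b.
Proof.
rewrite !best_pair !worst_pair /=.
case: ifP => Rma; case: ifP => Rmb //= am.
- by move=> _ Ram; move: am; rewrite (wpref_anti Ram Rma) eqxx.
- by move=> Ram _; apply: wpref_trans Ram Rmb.
Qed.

End Preference.

Section RankedOrders.
Variable A : finType.

Lemma card_below_lt (k : A -> nat) x : #|[set y | k y < k x]| < #|A|.
Proof.
rewrite -cardsT; apply/proper_card/properP; split; first exact: subsetT.
by exists x; rewrite ?inE ?ltnn.
Qed.

Lemma card_below_leq (k : A -> nat) x y :
  (#|[set z | k z < k x]| <= #|[set z | k z < k y]|) = (k x <= k y).
Proof.
case: (leqP (k x) (k y)) => kxy.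
  by apply/subset_leq_card/subsetP => z; rewrite !inE => /leq_trans; apply.
apply/negbTE; rewrite -ltnNge; apply/proper_card/properP; split.
  by apply/subsetP => z; rewrite !inE => /ltn_trans; apply.
by exists y; rewrite !inE ?ltnn.
Qed.

Definition key_rank (k : A -> nat) x : 'I_#|A| := Ordinal (card_below_lt k x).

Lemma key_rank_inj (k : A -> nat) : injective k -> injective (key_rank k).
Proof.
move=> k_inj x y /(congr1 val) /= kxy; apply/k_inj/eqP.
by rewrite eqn_leq -!card_below_leq kxy leqnn.
Qed.

Definition linord_of_key (k : A -> nat) (k_inj : injective k) : linord A :=
  perm (inj_comp (@enum_val_inj A A) (key_rank_inj k_inj)).

Lemma wpref_linord_of_key (k : A -> nat) (k_inj : injective k) x y :
  wpref (linord_of_key k_inj) x y = (k x <= k y).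
Proof. by rewrite /wpref /rank !permE /= !enum_valK card_below_leq. Qed.

Lemma index_enum_cat_inj (s : seq A) : injective (index^~ (s ++ enum A)).
Proof. by move=> x y; apply: (index_inj x); rewrite mem_cat mem_enum orbT. Qed.

Definition ranked (s : seq A) : linord A := linord_of_key (@index_enum_cat_inj s).

Lemma ranked_head x s : top (ranked (x :: s)) x.
Proof. by move=> y; rewrite wpref_linord_of_key /= eqxx. Qed.

Lemma ranked_cons x s y z : y != x -> z != x ->
  wpref (ranked (x :: s)) y z = wpref (ranked s) y z.
Proof.
move=> yx zx; rewrite !wpref_linord_of_key /=.
by rewrite [x == y]eq_sym [x == z]eq_sym (negbTE yx) (negbTE zx).
Qed.

End RankedOrders.

Lemma updateK (V A : finType) (P : profile V A) i Q : update (update P i Q) i (P i) = P.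
Proof. by apply/ffunP => j; rewrite !ffunE; case: eqP => [->|]. Qed.

Section StrategyProofRule.
Variables (V A : finType) (B : {set A}) (g : profile V A -> A).
Hypothesis g_range : forall P, g P \in B.
Hypothesis g_onto : forall x, x \in B -> exists P, g P = x.
Hypothesis g_sp : forall (P : profile V A) i Q, wpref (P i) (g P) (g (update P i Q)).

Lemma sp_update_monotone (P : profile V A) i Q :
  (forall y, wpref (P i) (g P) y -> wpref Q (g P) y) -> g (update P i Q) = g P.
Proof.
move=> lift; apply: (@wpref_anti _ Q).
  by have := g_sp (update P i Q) i (P i); rewrite updateK ffunE eqxx.
exact/lift/g_sp.
Qed.

Lemma sp_monotone (P P' : profile V A) :
  (forall i y, wpref (P i) (g P) y -> wpref (P' i) (g P) y) -> g P' = g P.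
Proof.
move=> lift; pose mix (s : seq V) : profile V A := [ffun j => if j \in s then P' j else P j].
suff mixE s : g (mix s) = g P.
  by rewrite -(mixE (enum V)); congr g; apply/ffunP => j; rewrite ffunE mem_enum.
elim: s => [|i s IH]; first by congr g; apply/ffunP => j; rewrite ffunE.
have -> : mix (i :: s) = update (mix s) i (P' i).
  by apply/ffunP => j; rewrite !ffunE inE; case: eqP => [->|].
rewrite -IH; apply: sp_update_monotone => y; rewrite IH ffunE.
by case: ifP => _ //; apply: lift.
Qed.

Lemma sp_unanimous (P : profile V A) x : x \in B -> (forall i, top (P i) x) -> g P = x.
Proof.
move=> xB x_top; have [P0 gP0] := g_onto xB; rewrite -gP0 in x_top *.
by apply: sp_monotone => i y _; apply: x_top.
Qed.

Lemma sp_pareto (P : profile V A) x y :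
  x \in B -> x != y -> (forall i, wpref (P i) x y) -> g P != y.
Proof.
move=> xB xy Pxy; apply/eqP => gPy.
have yx : y != x by rewrite eq_sym.
pose P' : profile V A := [ffun=> ranked [:: x; y]].
have : g P' = x by apply: sp_unanimous => // i; rewrite ffunE; apply: ranked_head.
suff -> : g P' = y by move/eqP; rewrite (negbTE yx).
rewrite -gPy; apply: sp_monotone => i z; rewrite gPy ffunE => Pyz.
by rewrite ranked_cons ?(wpref_neq_above xy (Pxy i) Pyz) //; apply: ranked_head.
Qed.

Definition supporters (P : profile V A) (a b : A) : {set V} :=
  [set i | ~~ wpref (P i) b a].

Definition decisive_for (S : {set V}) (a b : A) : Prop :=
  forall P, S \subset supporters P a b -> g P != b.

Lemma decisive_forS (S S' : {set V}) a b :
  S \subset S' -> decisive_for S a b -> decisive_for S' a b.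
Proof. by move=> sSS' dS P /(subset_trans sSS'); apply: dS. Qed.

Lemma decisive_for0 a b : b \in B -> ~ decisive_for set0 a b.
Proof.
move=> bB d0; have [P gPb] := g_onto bB.
by move: (d0 P (sub0set _)); rewrite gPb eqxx.
Qed.

Lemma decisive_for_supporters (Q : profile V A) a b :
  g Q = a -> a != b -> decisive_for (supporters Q a b) a b.
Proof.
move=> gQa ab P sQP; apply/eqP => gPb.
have ba : b != a by rewrite eq_sym.
pose P' : profile V A :=
  [ffun i => ranked (if wpref (P i) a b then [:: a; b] else [:: b; a])].
have gP'b : g P' = b.
  rewrite -gPb; apply: sp_monotone => i y; rewrite gPb ffunE.
  case: ifP => [Pab Pby | _ _]; last exact: ranked_head.
  by rewrite ranked_cons ?(wpref_neq_above ab Pab Pby) //; apply: ranked_head.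
have gP'a : g P' = a.
  rewrite -gQa; apply: sp_monotone => i y; rewrite gQa ffunE.
  case: ifP => [_ _ | Pab Qay]; first exact: ranked_head.
  have Qba : wpref (Q i) b a.
    apply: contraFT Pab => Qab.
    have /(subsetP sQP) : i \in supporters Q a b by rewrite inE.
    by rewrite inE negb_wpref.
  by rewrite ranked_cons ?(wpref_neq_above ba Qba Qay) //; apply: ranked_head.
by move: ab; rewrite -gP'a gP'b eqxx.
Qed.

(* The witness is a Condorcet cycle: S1 ranks a b c, S2 ranks c a b, the
   others b c a.  Its outcome is not b (decisiveness) and not outside
   {a, b, c} (Pareto), and the supporters of a over c, resp. of c over b,
   are S1, resp. S2. *)
Lemma decisive_forU (S1 S2 : {set V}) a b c : a \in B -> a != b -> a != c -> b != c ->
  decisive_for (S1 :|: S2) a b -> decisive_for S1 a c \/ decisive_for S2 c b.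
Proof.
move=> aB ab ac bc dS.
have [ba ca cb] : [/\ b != a, c != a & c != b] by split; rewrite eq_sym.
pose Q : profile V A := [ffun i => ranked (if i \in S1 then [:: a; b; c]
  else if i \in S2 then [:: c; a; b] else [:: b; c; a])].
have gQb : g Q != b.
  apply/dS/subsetP => i; rewrite !inE ffunE negb_wpref //.
  case: ifP => [_ _ | _ /= S2i]; first exact: ranked_head.
  by rewrite S2i ranked_cons //; apply: ranked_head.
have [gQa | gQa] := eqVneq (g Q) a.
  left; apply: decisive_forS (decisive_for_supporters gQa ac).
  apply/subsetP => i; rewrite inE; apply: contraR => S1i.
  rewrite ffunE (negbTE S1i); case: ifP => _; first exact: ranked_head.
  by rewrite ranked_cons //; apply: ranked_head.
have [gQc | gQc] := eqVneq (g Q) c.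
  right; apply: decisive_forS (decisive_for_supporters gQc cb).
  apply/subsetP => i; rewrite inE; apply: contraR => S2i.
  rewrite ffunE (negbTE S2i); case: ifP => _; last exact: ranked_head.
  by rewrite ranked_cons //; apply: ranked_head.
have a_over_gQ i : wpref (Q i) a (g Q).
  rewrite ffunE; case: ifP => _; first exact: ranked_head.
  case: ifP => _; first by rewrite ranked_cons //; apply: ranked_head.
  by rewrite ranked_cons // ranked_cons //; apply: ranked_head.
have a_gQ : a != g Q by rewrite eq_sym.
by move: (sp_pareto aB a_gQ a_over_gQ); rewrite eqxx.
Qed.

Lemma decisive_for_loser (S : {set V}) a b c : a \in B -> b \in B -> a != b -> a != c ->
  decisive_for S a b -> decisive_for S a c.
Proof.
move=> aB bB ab ac dab; have [<- // | bc] := eqVneq b c.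
rewrite -(setU0 S) in dab.
by case: (decisive_forU aB ab ac bc dab) => // /(decisive_for0 bB).
Qed.

Lemma decisive_for_winner (S : {set V}) a b c : a \in B -> c \in B -> a != b -> c != b ->
  decisive_for S a b -> decisive_for S c b.
Proof.
move=> aB cB ab cb dab; have [<- // | ac] := eqVneq a c.
have bc : b != c by rewrite eq_sym.
rewrite -(set0U S) in dab.
by case: (decisive_forU aB ab ac bc dab) => // /(decisive_for0 cB).
Qed.

Definition decisive (S : {set V}) : Prop :=
  forall a b, a \in B -> b \in B -> a != b -> decisive_for S a b.

Lemma decisiveT : decisive [set: V].
Proof.
move=> a b aB _ ab P /subsetP TP; have ba : b != a by rewrite eq_sym.
apply: sp_pareto aB ab _ => i.
by have := TP i (in_setT i); rewrite inE negb_wpref.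
Qed.

Hypothesis B_card : 3 <= #|B|.

Lemma exists_other x y : exists z, [&& z \in B, z != x & z != y].
Proof.
have lt_xy_B : #|[set x; y]| < #|B|.
  by rewrite cards2; case: (x != y) => //; apply: ltnW.
have /subsetPn[z zB] : ~~ (B \subset [set x; y]).
  by apply/negP => /subset_leq_card; rewrite leqNgt lt_xy_B.
by rewrite !inE negb_or => zxy; exists z; rewrite zB.
Qed.

Lemma three_distinct : exists a b c,
  [/\ a \in B, b \in B, c \in B & [/\ a != b, a != c & b != c]].
Proof.
have /card_gt0P[a aB] : 0 < #|B| by apply: leq_trans B_card.
have [b /and3P[bB ba _]] := exists_other a a.
have [c /and3P[cB ca cb]] := exists_other a b.
by exists a, b, c; split => //; split; rewrite eq_sym.
Qed.

Lemma decisive_for_decisive (S : {set V}) a b : a \in B -> b \in B -> a != b ->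
  decisive_for S a b -> decisive S.
Proof.
move=> aB bB ab dab x y xB yB xy.
have [ya | ya] := eqVneq y a; last first.
  have ay : a != y by rewrite eq_sym.
  exact: decisive_for_winner aB xB ay xy (decisive_for_loser aB bB ab ay dab).
rewrite {y yB}ya in xy *.
have [c /and3P[cB ca cx]] := exists_other a x.
have [ac xc] : a != c /\ x != c by split; rewrite eq_sym.
have dxc := decisive_for_winner aB xB ac xc (decisive_for_loser aB bB ab ac dab).
exact: decisive_for_loser xB cB xc xy dxc.
Qed.

Lemma decisive_setU (S1 S2 : {set V}) : decisive (S1 :|: S2) -> decisive S1 \/ decisive S2.
Proof.
have [a [b [c [aB bB cB [ab ac bc]]]]] := three_distinct.
move=> dS; case: (decisive_forU aB ab ac bc (dS a b aB bB ab)) => [dac | dcb].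
  by left; apply: decisive_for_decisive aB cB ac dac.
by right; apply: decisive_for_decisive cB bB _ dcb; rewrite eq_sym.
Qed.

Lemma decisive_neq0 : ~ decisive set0.
Proof.
have [a [b [_ [aB bB _ [ab _ _]]]]] := three_distinct.
by move=> d0; apply: decisive_for0 bB (d0 a b aB bB ab).
Qed.

Lemma decisive_singleton (S : {set V}) : decisive S -> exists i, decisive [set i].
Proof.
have [n] := ubnP #|S|; elim: n S => // n IH S /ltnSE leSn dS.
have /set0Pn[i iS] : S != set0 by apply/eqP => S0; apply: decisive_neq0; rewrite -S0.
move: dS; rewrite -(setD1K iS) => /decisive_setU[|dSi]; first by exists i.
apply: IH dSi; apply: leq_trans leSn.
by rewrite (cardsD1 i S) iS add1n.
Qed.

Lemma sp_dictator : exists i, forall (P : profile V A) y, y \in B -> wpref (P i) (g P) y.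
Proof.
have [i di] := decisive_singleton decisiveT.
exists i => P y yB; have [-> | yg] := eqVneq y (g P); first exact: wpref_refl.
apply: contraT => gPy; have := di _ _ yB (g_range P) yg P; rewrite eqxx; apply.
by rewrite sub1set inE.
Qed.

End StrategyProofRule.

Section MarianRule.
Variables (V A : finType) (F : profile V A -> {set A}) (m : A).
Hypothesis F_consular : consular F.
Hypothesis F_m : forall P, m \in F P.

Definition other (P : profile V A) : A := odflt m [pick x in F P :\ m].

Lemma setD1_other P : F P :\ m = [set other P].
Proof.
have /cards1P[x Fx] : #|F P :\ m| == 1.
  by move: (F_consular P); rewrite (cardsD1 m) F_m add1n => -[->].
rewrite /other Fx; case: pickP => [y /set1P -> // | /(_ x)].
by rewrite set11.
Qed.

Lemma other_neq P : other P != m.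
Proof. by have /setD1P[] : other P \in F P :\ m by rewrite setD1_other set11. Qed.

Lemma other_in_setC1 P : other P \in [set~ m].
Proof. by rewrite !inE other_neq. Qed.

Lemma F_pair P : F P = [set m; other P].
Proof. by rewrite -setD1_other (setD1K (F_m P)). Qed.

Lemma other_onto : weakly_viable F -> forall x, x \in [set~ m] -> exists P, other P = x.
Proof.
move=> F_viable x; rewrite !inE => xm; have [P] := F_viable x.
by rewrite F_pair !inE (negbTE xm) => /eqP ->; exists P.
Qed.

Lemma other_strategyproof : SPO F -> SPP F ->
  forall (P : profile V A) i Q, wpref (P i) (other P) (other (update P i Q)).
Proof.
move=> F_SPO F_SPP P i Q; apply: wpref_of_best_worst (other_neq P) _ _.
  by rewrite -!F_pair; apply: F_SPO.
by rewrite -!F_pair; apply: F_SPP.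
Qed.

End MarianRule.

Theorem proposition17 (V A : finType) (F : profile V A -> {set A}) :
  0 < #|V| -> 4 <= #|A| ->
  consular F -> marian F -> SPO F -> SPP F -> weakly_viable F ->
  exists i : V, weak_dictator F i.
Proof.
move=> _ A_card F_consular [m F_m] F_SPO F_SPP F_viable.
have B_card : 3 <= #|[set~ m]| by rewrite cardsC1; case: #|A| A_card.
have [i dict] := sp_dictator (other_in_setC1 F_consular F_m)
  (other_onto F_consular F_m F_viable) (other_strategyproof F_consular F_m F_SPO F_SPP) B_card.
exists i => P x x_top; have [-> // | xm] := eqVneq x m.
have <- : other F m P = x by apply: wpref_anti (dict P x _) (x_top _); rewrite !inE.
by rewrite (F_pair F_consular F_m) !inE eqxx orbT.
Qed.
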